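(* The PIR capacity of the complete graph $K_N$ on $N$ vertices satisfies $\mathscr{C}(K_N)\le \frac{2}{N+1}$.
   Context: Graph-based PIR model (non-colluding servers, 2-replication): vertices are servers, edges are files, each file stored on the two endpoints of its edge (for $K_N$, every pair of servers shares exactly one file); files are independent, each uniform on $\mathbb{F}_2^L$. A user wants $W_\theta$, $\theta$ uniform on the file indices and independent of the files; it sends queries $Q_1,\dots,Q_N$ (independent of the files) to the servers; server $i$ answers $A_i$, a deterministic function of $Q_i$ and the files on it. Reliability: $W_\theta$ is determined by all answers and queries. Privacy: $H(\theta\mid Q_i,W_{S_i})=H(\theta)$ for every $i$, $W_{S_i}$ being the files on server $i$. The rate is $L/\sum_i H(A_i)$; the PIR capacity is the supremum of rates over all schemes and file lengths $L$. *)

From Stdlib Require Import Reals.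
From HB Require Import structures.
From mathcomp Require Import all_boot all_order all_algebra.
From mathcomp Require Import Rstruct.

Set Implicit Arguments.
Unset Strict Implicit.
Unset Printing Implicit Defensive.

Import Order.TTheory GRing.Theory Num.Theory.

(* Edges of K_N = files: unordered pairs {a,b} of distinct servers, encoded a < b. *)
Definition edgeK (N : nat) : finType := {p : 'I_N * 'I_N | (p.1 < p.2)%N}.

(* Server i stores file e iff i is an endpoint of e. *)
Definition incident (N : nat) (i : 'I_N) (e : edgeK N) : bool :=
  ((sval e).1 == i) || ((sval e).2 == i).

Definition server_files (N : nat) (i : 'I_N) : finType := {e : edgeK N | incident i e}.

Local Open Scope ring_scope.

Definition is_prob (Omega : finType) (P : Omega -> R) : Prop :=
  (forall w, 0 <= P w) /\ \sum_(w : Omega) P w = 1.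

Definition Pr (Omega : finType) (P : Omega -> R) (E : pred Omega) : R :=
  \sum_(w : Omega | E w) P w.

Definition log2 (x : R) : R := ln x / ln 2.

Definition entropy (Omega : finType) (P : Omega -> R) (T : finType) (X : Omega -> T) : R :=
  - \sum_(t : T) Pr P (fun w => X w == t) * log2 (Pr P (fun w => X w == t)).

Definition cond_entropy (Omega : finType) (P : Omega -> R) (T U : finType)
  (X : Omega -> T) (Y : Omega -> U) : R :=
  entropy P (fun w => (X w, Y w)) - entropy P Y.

Definition files_on (N L : nat) (Omega : finType)
  (W : edgeK N -> Omega -> 'rV['F_2]_L) (i : 'I_N) (w : Omega)
  : {ffun server_files i -> 'rV['F_2]_L} :=
  [ffun e => W (sval e) w].

Definition all_files (N L : nat) (Omega : finType)
  (W : edgeK N -> Omega -> 'rV['F_2]_L) (w : Omega) : {ffun edgeK N -> 'rV['F_2]_L} :=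
  [ffun e => W e w].

Definition answer (N L : nat) (Omega : finType)
  (Qt : 'I_N -> finType) (Q : forall i, Omega -> Qt i)
  (At : 'I_N -> finType)
  (ans : forall i, Qt i -> {ffun server_files i -> 'rV['F_2]_L} -> At i)
  (W : edgeK N -> Omega -> 'rV['F_2]_L) (i : 'I_N) (w : Omega) : At i :=
  ans i (Q i w) (files_on W i w).

Definition KN_PIR_scheme (N L : nat) (Omega : finType) (P : Omega -> R)
  (theta : Omega -> edgeK N)
  (Qt : 'I_N -> finType) (Q : forall i, Omega -> Qt i)
  (At : 'I_N -> finType)
  (ans : forall i, Qt i -> {ffun server_files i -> 'rV['F_2]_L} -> At i)
  (W : edgeK N -> Omega -> 'rV['F_2]_L) : Prop :=
  is_prob P /\
  [/\ (* files independent, each uniform on F_2^L *)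
      (forall f : {ffun edgeK N -> 'rV['F_2]_L},
         Pr P (fun w => all_files W w == f) = ((2 ^ (L * #|edgeK N|))%N%:R)^-1),
      (forall t : edgeK N, Pr P (fun w => theta w == t) = (#|edgeK N|%:R)^-1),
      (forall (t : edgeK N) (q : forall i, Qt i) (f : {ffun edgeK N -> 'rV['F_2]_L}),
         Pr P (fun w => [&& theta w == t, [forall i, Q i w == q i] & all_files W w == f])
         = Pr P (fun w => (theta w == t) && [forall i, Q i w == q i])
           * Pr P (fun w => all_files W w == f)),
      (exists dec : (forall i, Qt i) -> (forall i, At i) -> 'rV['F_2]_L,
         forall w, 0 < P w ->
           dec (fun i => Q i w) (fun i => answer Q ans W i w) = W (theta w) w)
    &
      (forall i : 'I_N,
         cond_entropy P theta (fun w => (Q i w, files_on W i w)) = entropy P theta)].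

Definition PIR_rate (N L : nat) (Omega : finType) (P : Omega -> R)
  (Qt : 'I_N -> finType) (Q : forall i, Omega -> Qt i)
  (At : 'I_N -> finType)
  (ans : forall i, Qt i -> {ffun server_files i -> 'rV['F_2]_L} -> At i)
  (W : edgeK N -> Omega -> 'rV['F_2]_L) : R :=
  L%:R / \sum_(i < N) entropy P (answer Q ans W i).

(* Condition on the event theta = e.  By privacy, the query and the stored files of
   any single server have the same law as without conditioning, so every entropy
   computed from one server's data is unchanged; but now W_e is recoverable from
   all the answers and is uniform and independent of the queries and the other
   files.  For an edge d = ab this gives
     L <= H(A_a | Q_a, W_(S_a - d)) + H(A_b | Q_b, W_(S_b - d)),
   and for a triangle with edges e = ab, f = ac, g = bc, conditioning on theta = e
   and peeling off W_e, then W_f and W_g, gives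
     L + H(A_a | Q_a, W_(S_a - f)) + H(A_b | Q_b, W_(S_b - g)) <= H(A_a) + H(A_b) + H(A_c).
   Adding the three rotations of the latter to the three edge bounds shows that
   every triangle downloads at least 2L.  Averaging over the N triangles
   {k, k+1, k+2} gives sum_i H(A_i) >= 2NL/3, so the rate is at most
   3/(2N) <= 2/(N+1) when N >= 3. *)

From Stdlib Require Import Reals.
From HB Require Import structures.
From mathcomp Require Import all_boot all_order all_algebra.
From mathcomp Require Import Rstruct ring lra zify.
From Stdlib Require Import FunctionalExtensionality.

Set Implicit Arguments.
Unset Strict Implicit.
Unset Printing Implicit Defensive.

Import Order.TTheory GRing.Theory Num.Theory.
Local Open Scope ring_scope.

Lemma sum_pair (I J : finType) (F : I * J -> R) :
  \sum_p F p = \sum_i \sum_j F (i, j).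
Proof. by rewrite pair_bigA; apply: eq_bigr => -[i j]. Qed.

Lemma ln2_gt0 : 0 < ln 2.
Proof.
apply/RltP; apply: Rlt_trans ln_lt_2; apply: Rinv_0_lt_compat; exact: Rlt_0_2.
Qed.

Lemma ler_ln x y : 0 < x -> x <= y -> ln x <= ln y.
Proof.
move=> x_gt0; rewrite le_eqVlt => /predU1P[-> //|ltxy].
by apply/RleP/Rlt_le/ln_increasing; apply/RltP.
Qed.

Lemma ln_le_subr1 u : 0 < u -> ln u <= u - 1.
Proof.
move=> u_gt0; have /RleP := exp_ineq1_le (ln u).
rewrite exp_ln; last exact/RltP.
by move=> h; have : 1 + ln u <= u := h; lra.
Qed.

Lemma ln_eq_subr1 u : 0 < u -> ln u = u - 1 -> u = 1.
Proof.
move=> u_gt0 ln_u; apply/eqP/negPn/negP => u_neq1.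
have /RltP := exp_ineq1 (ln u) (ln_neq_0 u (elimN eqP u_neq1) (elimT RltP u_gt0)).
rewrite exp_ln; last exact/RltP.
by move=> h; have : 1 + ln u < u := h; lra.
Qed.

Lemma lnM x y : 0 < x -> 0 < y -> ln (x * y) = ln x + ln y.
Proof. by move=> /RltP x_gt0 /RltP y_gt0; rewrite ln_mult. Qed.

Lemma lnV x : 0 < x -> ln x^-1 = - ln x.
Proof. by move=> /RltP x_gt0; rewrite ln_Rinv. Qed.

Lemma ln_div x y : 0 < x -> 0 < y -> ln (x / y) = ln x - ln y.
Proof. by move=> x_gt0 y_gt0; rewrite lnM ?invr_gt0 // lnV. Qed.

Lemma ln_exp2n n : ln (2 ^ n)%N%:R = n%:R * ln 2.
Proof.
elim: n => [|n IHn]; first by rewrite expn0 mul0r ln_1.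
by rewrite expnS natrM lnM ?ltr0n ?expn_gt0 // IHn [in RHS]mulrSr mulrDl mul1r addrC.
Qed.

(** * Entropy of random variables on a finite probability space *)

Section Entropy.
Variables (Omega : finType) (P : Omega -> R).
Hypothesis P_prob : is_prob P.

Definition determined (T U : Type) (X : Omega -> T) (Y : Omega -> U) :=
  forall w w', P w != 0 -> P w' != 0 -> Y w = Y w' -> X w = X w'.

Definition indep (T U : finType) (X : Omega -> T) (Y : Omega -> U) :=
  forall x y, Pr P (fun w => (X w, Y w) == (x, y))
              = Pr P (fun w => X w == x) * Pr P (fun w => Y w == y).

Lemma prob_ge0 w : 0 <= P w. Proof. by case: P_prob. Qed.

Lemma prob_sum1 : \sum_w P w = 1. Proof. by case: P_prob. Qed.

Lemma prob_gt0 w : P w != 0 -> 0 < P w.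
Proof. by move=> Pw_neq0; rewrite lt_def Pw_neq0 prob_ge0. Qed.

Lemma Pr_ge0 (E : pred Omega) : 0 <= Pr P E.
Proof. by apply: sumr_ge0 => w _; exact: prob_ge0. Qed.

Lemma Pr_le_ae (E1 E2 : pred Omega) :
  (forall w, P w != 0 -> E1 w -> E2 w) -> Pr P E1 <= Pr P E2.
Proof.
move=> sub12; rewrite /Pr [leRHS]big_mkcond [leLHS]big_mkcond /=.
apply: ler_sum => w _; case: (eqVneq (P w) 0) => [->|Pw_neq0]; first by rewrite !if_same.
case E1w: (E1 w); first by rewrite (sub12 w Pw_neq0 E1w).
by case: (E2 w); rewrite ?prob_ge0.
Qed.

Lemma Pr_le1 (E : pred Omega) : Pr P E <= 1.
Proof. by rewrite -prob_sum1; apply: (@Pr_le_ae E xpredT). Qed.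

Lemma Pr_gt0 (T : eqType) (X : Omega -> T) w :
  P w != 0 -> 0 < Pr P (fun v => X v == X w).
Proof.
move=> Pw_neq0; apply: lt_le_trans (prob_gt0 Pw_neq0) _.
by rewrite /Pr (bigD1 w) //= lerDl; apply: sumr_ge0 => v _; exact: prob_ge0.
Qed.

Lemma Pr_neq0_witness (T : eqType) (X : Omega -> T) t :
  Pr P (fun w => X w == t) != 0 -> exists2 w, P w != 0 & X w = t.
Proof.
case: (pickP (fun w => (P w != 0) && (X w == t))) => [w /andP[Pw_neq0 /eqP Xw] _|none].
  by exists w.
rewrite /Pr big1 ?eqxx // => w /eqP Xw.
by move: (none w); rewrite Xw eqxx andbT => /negbFE/eqP.
Qed.

Lemma sum_law (T : finType) (X : Omega -> T) (F : T -> R) :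
  \sum_w P w * F (X w) = \sum_t Pr P (fun w => X w == t) * F t.
Proof.
rewrite (partition_big X xpredT) //=; apply: eq_bigr => t _.
by rewrite /Pr big_distrl; apply: eq_bigr => w /eqP ->.
Qed.

Lemma sum_Pr (T : finType) (X : Omega -> T) : \sum_t Pr P (fun w => X w == t) = 1.
Proof. by rewrite -prob_sum1 [RHS](partition_big X xpredT). Qed.

Lemma sum_Pr_fst (T U : finType) (X : Omega -> T) (Y : Omega -> U) y :
  \sum_x Pr P (fun w => (X w, Y w) == (x, y)) = Pr P (fun w => Y w == y).
Proof.
rewrite [RHS]/Pr (partition_big X xpredT) //=; apply: eq_bigr => x _.
by apply: eq_bigl => w; rewrite xpair_eqE andbC.
Qed.

Lemma sum_Pr_snd (T U : finType) (X : Omega -> T) (Y : Omega -> U) x :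
  \sum_y Pr P (fun w => (X w, Y w) == (x, y)) = Pr P (fun w => X w == x).
Proof. by rewrite [RHS]/Pr (partition_big Y xpredT). Qed.

Definition mean_ln (T : finType) (X : Omega -> T) :=
  \sum_w P w * ln (Pr P (fun v => X v == X w)).

Lemma entropyE (T : finType) (X : Omega -> T) : entropy P X = - mean_ln X / ln 2.
Proof.
rewrite /entropy /mean_ln mulNr big_distrl /=.
rewrite (eq_bigr (fun w => P w * (ln (Pr P (fun v => X v == X w)) / ln 2))); last first.
  by move=> w _; rewrite mulrA.
by rewrite (sum_law X (fun t => ln (Pr P (fun w => X w == t)) / ln 2)).
Qed.

Lemma cond_entropyE (T U : finType) (X : Omega -> T) (Y : Omega -> U) :
  cond_entropy P X Y = entropy P (fun w => (X w, Y w)) - entropy P Y.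
Proof. exact: RminusE. Qed.

(* Gibbs' inequality, through ln u <= u - 1. *)
Section LogRatio.
Variables (T : finType) (V : Omega -> T) (q : T -> R).
Hypothesis q_gt0 : forall w, P w != 0 -> 0 < q (V w).

Let ratio w := q (V w) / Pr P (fun v => V v == V w).

Let ratio_gt0 w : P w != 0 -> 0 < ratio w.
Proof. by move=> Pw_neq0; rewrite divr_gt0 ?q_gt0 ?Pr_gt0. Qed.

Let sum_ratio_sub1 :
  \sum_w P w * (ratio w - 1) = \sum_(t | Pr P (fun w => V w == t) != 0) q t - 1.
Proof.
under eq_bigr do rewrite mulrBr mulr1.
rewrite sumrB prob_sum1 (sum_law V (fun t => q t / Pr P (fun w => V w == t))).
congr (_ - 1); rewrite [RHS]big_mkcond /=; apply: eq_bigr => t _.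
by case: eqP => [->|/eqP ?]; rewrite ?mul0r // mulrC divfK.
Qed.

Lemma mean_ln_ratio_le :
  \sum_w P w * ln (ratio w) <= \sum_(t | Pr P (fun w => V w == t) != 0) q t - 1.
Proof.
rewrite -sum_ratio_sub1; apply: ler_sum => w _.
case: (eqVneq (P w) 0) => [->|Pw_neq0]; first by rewrite !mul0r.
by rewrite ler_wpM2l ?prob_ge0 ?ln_le_subr1 ?ratio_gt0.
Qed.

Lemma mean_ln_ratio_eq :
  \sum_w P w * ln (ratio w) = \sum_(t | Pr P (fun w => V w == t) != 0) q t - 1 ->
  forall w, P w != 0 -> q (V w) = Pr P (fun v => V v == V w).
Proof.
rewrite -sum_ratio_sub1 => eq_sums w Pw_neq0.
pose gap w := P w * (ratio w - 1 - ln (ratio w)).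
have gap_ge0 v : 0 <= gap v.
  case: (eqVneq (P v) 0) => [Pv0|Pv_neq0]; first by rewrite /gap Pv0 mul0r.
  by rewrite mulr_ge0 ?prob_ge0 // subr_ge0 ln_le_subr1 ?ratio_gt0.
have /psumr_eq0P gap0 : \sum_v gap v = 0.
  by rewrite /gap; under eq_bigr do rewrite mulrBr; rewrite sumrB eq_sums subrr.
have /eqP := gap0 (fun v _ => gap_ge0 v) w isT.
rewrite mulf_eq0 (negbTE Pw_neq0) /= subr_eq0 => /eqP ln_ratio.
have := ln_eq_subr1 (ratio_gt0 Pw_neq0) (esym ln_ratio).
rewrite /ratio => /(congr1 ( *%R^~ (Pr P (fun v => V v == V w)))).
by rewrite mul1r divfK // gt_eqF ?Pr_gt0.
Qed.

End LogRatio.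

Lemma entropy_ge0 (T : finType) (X : Omega -> T) : 0 <= entropy P X.
Proof.
rewrite entropyE; apply: mulr_ge0; last by rewrite invr_ge0 ltW ?ln2_gt0.
rewrite oppr_ge0; apply: sumr_le0 => w _.
case: (eqVneq (P w) 0) => [->|Pw_neq0]; first by rewrite mul0r.
rewrite pmulr_rle0 ?prob_gt0 //.
by have := ler_ln (Pr_gt0 X Pw_neq0) (Pr_le1 _); rewrite ln_1.
Qed.

Lemma entropy_le_determined (T U : finType) (X : Omega -> T) (Y : Omega -> U) :
  determined X Y -> entropy P X <= entropy P Y.
Proof.
move=> detX; rewrite !entropyE ler_pM2r ?invr_gt0 ?ln2_gt0 // lerN2.
apply: ler_sum => w _; case: (eqVneq (P w) 0) => [->|Pw_neq0]; first by rewrite !mul0r.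
rewrite ler_wpM2l ?prob_ge0 // ler_ln ?Pr_gt0 //.
by apply: Pr_le_ae => v Pv_neq0 /eqP Yv; apply/eqP; exact: detX.
Qed.

Lemma entropy_eq_determined (T U : finType) (X : Omega -> T) (Y : Omega -> U) :
  determined X Y -> determined Y X -> entropy P X = entropy P Y.
Proof. by move=> detX detY; apply/le_anti; rewrite !entropy_le_determined. Qed.

Lemma entropy_const (T : finType) (x : T) : entropy P (fun _ => x) = 0.
Proof.
rewrite entropyE /mean_ln (_ : Pr P _ = 1) ?ln_1; last first.
  by rewrite -prob_sum1; apply: eq_bigl => w; rewrite eqxx.
by rewrite big1 ?oppr0 ?mul0r // => w _; rewrite mulr0.
Qed.

Lemma mean_ln_submod (TX TY TZ : finType)
    (X : Omega -> TX) (Y : Omega -> TY) (Z : Omega -> TZ) :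
  mean_ln (fun w => (X w, Z w)) + mean_ln (fun w => (Y w, Z w))
  <= mean_ln (fun w => (X w, Y w, Z w)) + mean_ln Z.
Proof.
pose V w := (X w, Y w, Z w).
pose pXZ (t : TX * TY * TZ) := Pr P (fun v => (X v, Z v) == (t.1.1, t.2)).
pose pYZ (t : TX * TY * TZ) := Pr P (fun v => (Y v, Z v) == (t.1.2, t.2)).
pose pZ (t : TX * TY * TZ) := Pr P (fun v => Z v == t.2).
(* q is a sub-probability on triples, with ln (q / p) the submodularity defect. *)
pose q t := pXZ t * pYZ t / pZ t.
have q_ge0 t : 0 <= q t by rewrite !mulr_ge0 ?invr_ge0 ?Pr_ge0.
have q_gt0 w : P w != 0 -> 0 < q (V w).
  move=> Pw_neq0; rewrite /q divr_gt0 ?mulr_gt0 //.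
  - exact: (Pr_gt0 (fun v => (X v, Z v)) Pw_neq0).
  - exact: (Pr_gt0 (fun v => (Y v, Z v)) Pw_neq0).
  - exact: (Pr_gt0 Z Pw_neq0).
have sum_q_le1 : \sum_t q t <= 1.
  rewrite -(sum_Pr Z) sum_pair sum_pair.
  under eq_bigr do rewrite exchange_big.
  rewrite exchange_big /=; apply: ler_sum => z _.
  rewrite /q /pXZ /pYZ /pZ /=.
  under eq_bigr do rewrite -big_distrl -big_distrr /=.
  rewrite -!big_distrl /= !sum_Pr_fst.
  case: (eqVneq (Pr P (fun v => Z v == z)) 0) => [->|pz_neq0]; first by rewrite !mul0r.
  by rewrite mulfK.
rewrite -subr_le0.
have -> : mean_ln (fun w => (X w, Z w)) + mean_ln (fun w => (Y w, Z w))
          - (mean_ln V + mean_ln Z)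
        = \sum_w P w * ln (q (V w) / Pr P (fun v => V v == V w)).
  rewrite /mean_ln -!big_split -sumrB /=; apply: eq_bigr => w _.
  case: (eqVneq (P w) 0) => [->|Pw_neq0]; first by rewrite !mul0r !addr0 subr0.
  have pXZ_gt0 := Pr_gt0 (fun v => (X v, Z v)) Pw_neq0.
  have pYZ_gt0 := Pr_gt0 (fun v => (Y v, Z v)) Pw_neq0.
  have pZ_gt0 := Pr_gt0 Z Pw_neq0.
  have pV_gt0 := Pr_gt0 V Pw_neq0.
  rewrite ln_div ?q_gt0 // /q ln_div ?mulr_gt0 // lnM //; ring.
apply: le_trans (mean_ln_ratio_le q_gt0) _.
rewrite subr_le0; apply: le_trans sum_q_le1.
by rewrite [leRHS](bigID (fun t => Pr P (fun v => V v == t) != 0)) /= lerDl sumr_ge0.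
Qed.

Lemma entropy_submod (TX TY TZ : finType)
    (X : Omega -> TX) (Y : Omega -> TY) (Z : Omega -> TZ) :
  entropy P (fun w => (X w, Y w, Z w)) + entropy P Z
  <= entropy P (fun w => (X w, Z w)) + entropy P (fun w => (Y w, Z w)).
Proof.
rewrite !entropyE -!mulrDl ler_pM2r ?invr_gt0 ?ln2_gt0 // -!opprD lerN2.
exact: mean_ln_submod.
Qed.

Lemma entropy_pair_le (T U : finType) (X : Omega -> T) (Y : Omega -> U) :
  entropy P (fun w => (X w, Y w)) <= entropy P X + entropy P Y.
Proof.
have := entropy_submod X Y (fun _ => tt); rewrite entropy_const addr0.
rewrite (@entropy_eq_determined _ _ (fun w => (X w, Y w, tt)) (fun w => (X w, Y w))).
rewrite (@entropy_eq_determined _ _ (fun w => (X w, tt)) X).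
rewrite (@entropy_eq_determined _ _ (fun w => (Y w, tt)) Y) //.
all: move=> w w' _ _; first [by move=> -> | by case=> -> | by case=> -> ->].
Qed.

Lemma entropy_indep (T U : finType) (X : Omega -> T) (Y : Omega -> U) :
  indep X Y -> entropy P (fun w => (X w, Y w)) = entropy P X + entropy P Y.
Proof.
move=> XY; rewrite !entropyE -mulrDl -opprD; congr (- _ / _).
rewrite /mean_ln -big_split /=; apply: eq_bigr => w _.
case: (eqVneq (P w) 0) => [->|Pw_neq0]; first by rewrite !mul0r addr0.
by rewrite XY lnM ?mulrDr ?Pr_gt0.
Qed.

Lemma entropy_uniform (T : finType) (X : Omega -> T) :
  (forall t, Pr P (fun w => X w == t) = #|T|%:R^-1) -> entropy P X = log2 #|T|%:R.
Proof.
move=> X_unif.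
have card_inv : #|T|%:R^-1 *+ #|T| = 1 :> R.
  by have := sum_Pr X; rewrite (eq_bigr _ (fun t _ => X_unif t)) sumr_const.
have card_gt0 : 0 < #|T|%:R :> R.
  rewrite ltr0n lt0n; apply: contra_eqN card_inv => /eqP->.
  by rewrite mulr0n eq_sym oner_eq0.
rewrite /entropy.
rewrite (eq_bigr _ (fun t _ => congr2 (fun a b => a * log2 b) (X_unif t) (X_unif t))).
by rewrite sumr_const -mulrnAl card_inv mul1r /log2 !RdivE lnV // RoppE mulNr opprK.
Qed.

Lemma indep_of_cond_entropy (T U : finType) (X : Omega -> T) (Y : Omega -> U) :
  cond_entropy P X Y = entropy P X -> indep X Y.
Proof.
move=> no_info.
pose V w := (X w, Y w).
pose q (t : T * U) := Pr P (fun w => X w == t.1) * Pr P (fun w => Y w == t.2).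
have q_ge0 t : 0 <= q t by rewrite mulr_ge0 ?Pr_ge0.
have q_gt0 w : P w != 0 -> 0 < q (V w) by move=> Pw_neq0; rewrite mulr_gt0 ?Pr_gt0.
have sum_q : \sum_t q t = 1.
  rewrite sum_pair -[RHS](sum_Pr X); apply: eq_bigr => x _.
  by rewrite /q /= -big_distrr /= sum_Pr mulr1.
have mean_ln_V : mean_ln V = mean_ln X + mean_ln Y.
  move: no_info; rewrite cond_entropyE !entropyE => /(congr1 ( *%R^~ (ln 2))).
  by rewrite mulrBl !divfK ?gt_eqF ?ln2_gt0 // /V; lra.
have ln_ratio0 : \sum_w P w * ln (q (V w) / Pr P (fun v => V v == V w)) = 0.
  apply: (@etrans _ _ (mean_ln X + mean_ln Y - mean_ln V)); last by rewrite mean_ln_V subrr.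
  rewrite /mean_ln -big_split -sumrB /=; apply: eq_bigr => w _.
  case: (eqVneq (P w) 0) => [->|Pw_neq0]; first by rewrite !mul0r subr0 addr0.
  rewrite ln_div ?q_gt0 ?Pr_gt0 // lnM ?Pr_gt0 //; ring.
set S := \sum_(t | Pr P (fun w => V w == t) != 0) q t.
have S_le1 : S <= 1.
  by rewrite -sum_q [leRHS](bigID (fun t => Pr P (fun w => V w == t) != 0)) /= lerDl sumr_ge0.
have S1 : S = 1 by have := mean_ln_ratio_le q_gt0; rewrite ln_ratio0 -/S; lra.
have q_supp : forall w, P w != 0 -> q (V w) = Pr P (fun v => V v == V w).
  by apply: mean_ln_ratio_eq q_gt0 _; rewrite ln_ratio0 -/S S1 subrr.
move=> x y.
case: (eqVneq (Pr P (fun w => V w == (x, y))) 0) => [pV0|/Pr_neq0_witness[w Pw_neq0 Vw]].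
  have : \sum_(t | Pr P (fun w => V w == t) == 0) q t = 0.
    move: sum_q; rewrite (bigID (fun t => Pr P (fun w => V w == t) != 0)) /= -/S S1.
    by under eq_bigl do rewrite negbK; lra.
  move/psumr_eq0P => /(_ (fun t _ => q_ge0 t) (x, y)).
  by rewrite pV0 eqxx /q /= => /(_ isT) ->.
by move: (q_supp w Pw_neq0); rewrite Vw.
Qed.

Section JointConst.
Variables (T U : finType) (X : Omega -> T) (Y : Omega -> U) (c : U -> R).
Hypothesis joint_const : forall x y, Pr P (fun w => (X w, Y w) == (x, y)) = c y.

Let Pr_fst x : Pr P (fun w => X w == x) = \sum_y c y.
Proof. by rewrite -(sum_Pr_snd X Y); apply: eq_bigr => y _; rewrite joint_const. Qed.

Let Pr_snd y : Pr P (fun w => Y w == y) = c y *+ #|T|.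
Proof.
by rewrite -(sum_Pr_fst X Y); under eq_bigr do rewrite joint_const; rewrite sumr_const.
Qed.

Let sum_c : (\sum_y c y) *+ #|T| = 1.
Proof.
by rewrite -(sum_Pr X); under [RHS]eq_bigr do rewrite Pr_fst; rewrite sumr_const.
Qed.

Let card_neq0 : #|T|%:R != 0 :> R.
Proof.
apply/eqP => card0; move: sum_c.
by rewrite -mulr_natr card0 mulr0 => /eqP; rewrite eq_sym oner_eq0.
Qed.

Lemma uniform_of_joint_const x : Pr P (fun w => X w == x) = #|T|%:R^-1.
Proof. by rewrite Pr_fst; apply: (mulIf card_neq0); rewrite mulVf // mulr_natr sum_c. Qed.

Lemma indep_of_joint_const : indep X Y.
Proof.
move=> x y; rewrite joint_const uniform_of_joint_const Pr_snd -[c y *+ _]mulr_natr.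
by rewrite mulrCA mulVf // mulr1.
Qed.

End JointConst.

Lemma cond_entropy_le (T U : finType) (X : Omega -> T) (Y : Omega -> U) :
  cond_entropy P X Y <= entropy P X.
Proof. by rewrite !cond_entropyE lerBlDr entropy_pair_le. Qed.

Lemma cond_entropy_indep (T U : finType) (X : Omega -> T) (Y : Omega -> U) :
  indep X Y -> cond_entropy P X Y = entropy P X.
Proof. by move=> XY; rewrite cond_entropyE entropy_indep // addrK. Qed.

Lemma cond_entropy_le_l (T T' U : finType)
    (X : Omega -> T) (X' : Omega -> T') (Y : Omega -> U) :
  determined X (fun w => (X' w, Y w)) -> cond_entropy P X Y <= cond_entropy P X' Y.
Proof.
move=> detX; rewrite !cond_entropyE lerD2r; apply: entropy_le_determined.
by move=> w w' Pw Pw' e; rewrite (detX w w' Pw Pw' e); case: e => _ ->.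
Qed.

Lemma cond_entropy_le_r (T U V : finType)
    (X : Omega -> T) (Y : Omega -> U) (Z : Omega -> V) :
  determined Z Y -> cond_entropy P X Y <= cond_entropy P X Z.
Proof.
move=> detZ; have := entropy_submod X Y Z; rewrite !cond_entropyE.
rewrite (@entropy_eq_determined _ _ (fun w => (X w, Y w, Z w)) (fun w => (X w, Y w))).
- rewrite (@entropy_eq_determined _ _ (fun w => (Y w, Z w)) Y); first lra.
  + by move=> w w' Pw Pw' eY; rewrite eY (detZ w w' Pw Pw' eY).
  + by move=> w w' _ _ [].
- by move=> w w' Pw Pw' [eX eY]; rewrite eX eY (detZ w w' Pw Pw' eY).
- by move=> w w' _ _ [-> ->].
Qed.

Lemma cond_entropy_pairE (T U V : finType)
    (X : Omega -> T) (Z : Omega -> U) (Y : Omega -> V) :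
  cond_entropy P (fun w => (X w, Z w)) Y
  = cond_entropy P Z Y + cond_entropy P X (fun w => (Z w, Y w)).
Proof.
rewrite !cond_entropyE.
rewrite (@entropy_eq_determined _ _ (fun w => (X w, Z w, Y w)) (fun w => (X w, (Z w, Y w)))).
- lra.
- by move=> w w' _ _ [-> -> ->].
- by move=> w w' _ _ [-> -> ->].
Qed.

Lemma cond_entropy_pair_le (T U V : finType)
    (X : Omega -> T) (Z : Omega -> U) (Y : Omega -> V) :
  cond_entropy P (fun w => (X w, Z w)) Y <= cond_entropy P X Y + cond_entropy P Z Y.
Proof.
rewrite cond_entropy_pairE addrC lerD2r; apply: cond_entropy_le_r.
by move=> w w' _ _ [].
Qed.

Lemma cond_entropy_le_indep (TA TU TY TZ : finType)
    (A : Omega -> TA) (U : Omega -> TU) (Y : Omega -> TY) (Z : Omega -> TZ) :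
  determined Z Y -> determined A (fun w => (U w, Z w)) -> indep U Y ->
  cond_entropy P A Z <= cond_entropy P A Y.
Proof.
move=> detZ detA UY; have := entropy_submod U Y (fun w => (A w, Z w)).
rewrite (@entropy_eq_determined _ _ (fun w => (U w, Y w, (A w, Z w))) (fun w => (U w, Y w)));
  last 2 first.
- move=> w w' Pw Pw' [eU eY]; have eZ := detZ w w' Pw Pw' eY.
  by rewrite eU eY eZ (detA w w' Pw Pw') ?eU ?eZ.
- by move=> w w' _ _ [-> -> _ _].
rewrite (@entropy_eq_determined _ _ (fun w => (U w, (A w, Z w))) (fun w => (U w, Z w)));
  last 2 first.
- by move=> w w' Pw Pw' e; rewrite (detA w w' Pw Pw' e); case: e => -> ->.
- by move=> w w' _ _ [-> _ ->].
rewrite (@entropy_eq_determined _ _ (fun w => (Y w, (A w, Z w))) (fun w => (A w, Y w)));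
  last 2 first.
- by move=> w w' Pw Pw' [eA eY]; rewrite eA eY (detZ w w' Pw Pw' eY).
- by move=> w w' _ _ [-> -> _].
rewrite entropy_indep // !cond_entropyE.
by have := entropy_pair_le U Z; lra.
Qed.

End Entropy.

Lemma entropy_comp_eq_law (Omega : finType) (P1 P2 : Omega -> R) (T U : finType)
    (V : Omega -> T) (g : T -> U) :
  (forall t, Pr P1 (fun w => V w == t) = Pr P2 (fun w => V w == t)) ->
  entropy P1 (fun w => g (V w)) = entropy P2 (fun w => g (V w)).
Proof.
move=> same_law.
suff Pr_comp P' u : Pr P' (fun w => g (V w) == u)
    = \sum_(t | g t == u) Pr P' (fun w => V w == t).
  by rewrite /entropy; congr (- _); apply: eq_bigr => u _; rewrite !Pr_comp;
     under eq_bigr do rewrite same_law.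
rewrite /Pr (partition_big V (fun t => g t == u)) //=.
apply: eq_bigr => t gtu; apply: eq_bigl => w.
by case: (eqVneq (V w) t) => [->|_]; rewrite ?gtu ?andbF.
Qed.

Lemma cond_entropy_comp_eq_law (Omega : finType) (P1 P2 : Omega -> R)
    (T U1 U2 : finType) (V : Omega -> T) (g : T -> U1) (h : T -> U2) :
  (forall t, Pr P1 (fun w => V w == t) = Pr P2 (fun w => V w == t)) ->
  cond_entropy P1 (fun w => g (V w)) (fun w => h (V w))
  = cond_entropy P2 (fun w => g (V w)) (fun w => h (V w)).
Proof.
move=> same_law; rewrite !cond_entropyE (entropy_comp_eq_law h same_law).
by rewrite (entropy_comp_eq_law (fun t => (g t, h t)) same_law).
Qed.

(** * PIR schemes on K_N conditioned on the desired file *)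

Definition joins (N : nat) (e : edgeK N) (a b : 'I_N) :=
  forall k, incident k e = (k == a) || (k == b).

Lemma joinsC (N : nat) (e : edgeK N) a b : joins e a b -> joins e b a.
Proof. by move=> eab k; rewrite eab orbC. Qed.

Lemma exists_joins (N : nat) (a b : 'I_N) : a != b -> exists e : edgeK N, joins e a b.
Proof.
case: (ltngtP a b) => [ltab|ltba|/val_inj->]; last by rewrite eqxx.
  by exists (exist _ (a, b) ltab) => k; rewrite /incident /= !(eq_sym _ k).
by exists (exist _ (b, a) ltba) => k; rewrite /incident /= orbC !(eq_sym _ k).
Qed.

Lemma joins_neq (N : nat) (e f : edgeK N) a b c :
  joins e a b -> joins f a c -> b != a -> b != c -> e != f.
Proof.
move=> eab fac ba bc; apply: contraTneq isT => ef.
by have := eab b; rewrite ef fac eqxx orbT (negbTE ba) (negbTE bc).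
Qed.

Section Scheme.
Variables (N L : nat) (Omega : finType) (P : Omega -> R) (theta : Omega -> edgeK N)
  (Qt : 'I_N -> finType) (Q : forall i, Omega -> Qt i)
  (At : 'I_N -> finType)
  (ans : forall i, Qt i -> {ffun server_files i -> 'rV['F_2]_L} -> At i)
  (W : edgeK N -> Omega -> 'rV['F_2]_L).
Hypothesis scheme : KN_PIR_scheme P theta Q ans W.

Local Notation A := (answer Q ans W).

Let P_prob : is_prob P. Proof. by case: scheme. Qed.

Definition queries w : {dffun forall i, Qt i} := [ffun i => Q i w].

Definition answers w : {dffun forall i, At i} := [ffun i => A i w].

(* (Q, W outside D), with the files in D masked by 0 to keep a fixed finite type. *)
Definition view (D : pred (edgeK N)) w :=
  (queries w, [ffun x => if D x then 0 else W x w]).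

Definition local i w := (Q i w, files_on W i w).

Definition local_view i (d : edgeK N) w :=
  (Q i w, [ffun s : server_files i => if sval s == d then 0 else files_on W i w s]).

(* The law of the scheme given theta = e, since theta is uniform on the edges. *)
Definition cond_theta (e : edgeK N) w := if theta w == e then #|edgeK N|%:R * P w else 0.

Lemma view_eq (D : pred (edgeK N)) (w w' : Omega) :
  view D w = view D w' <->
  (forall i, Q i w = Q i w') /\ (forall x, ~~ D x -> W x w = W x w').
Proof.
split=> [[/ffunP eQ /ffunP eW]|[eQ eW]].
  split=> [i|x Dx]; [have := eQ i | have := eW x]; rewrite !ffunE //.
  by rewrite (negbTE Dx).
congr pair; apply/ffunP; [move=> i | move=> x]; rewrite !ffunE; first exact: eQ.
by case: ifP => // /negbT /eW.
Qed.

Lemma view_sub_eq (D D' : pred (edgeK N)) (w w' : Omega) :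
  (forall x, D x -> D' x) -> view D w = view D w' -> view D' w = view D' w'.
Proof.
move=> subDD' /view_eq[eQ eW]; apply/view_eq; split=> // x D'x.
by apply: eW; apply: contra D'x; exact: subDD'.
Qed.

Lemma answer_eq_view k (D : pred (edgeK N)) (w w' : Omega) :
  (forall x, D x -> ~~ incident k x) -> view D w = view D w' -> A k w = A k w'.
Proof.
move=> far /view_eq[eQ eW]; rewrite /answer eQ; congr ans.
by apply/ffunP => s; rewrite !ffunE; apply: eW; exact: contraL (far _) (valP s).
Qed.

Lemma answers_eq_view (S : pred 'I_N) (D : pred (edgeK N)) (w w' : Omega) :
  (forall x k, D x -> incident k x -> S k) -> view D w = view D w' ->
  (forall k, S k -> A k w = A k w') -> answers w = answers w'.
Proof.
move=> DS ev eS; apply/ffunP => k; rewrite !ffunE.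
case Sk: (S k); first exact: eS.
by apply: answer_eq_view ev => x Dx; apply: contraFN Sk; exact: DS.
Qed.

Lemma local_view_eq k d w w' :
  view (pred1 d) w = view (pred1 d) w' -> local_view k d w = local_view k d w'.
Proof.
case/view_eq => eQ eW; congr pair; first exact: eQ.
by apply/ffunP => s; rewrite !ffunE; case: eqP => // /eqP; exact: eW.
Qed.

Lemma answer_eq_local k d w w' :
  W d w = W d w' -> local_view k d w = local_view k d w' -> A k w = A k w'.
Proof.
move=> eWd [eQ /ffunP eF]; rewrite /answer eQ; congr ans; apply/ffunP => s.
by have := eF s; rewrite /files_on !ffunE; case: eqP => [-> _|_ ->].
Qed.

Lemma card_edges_gt0 : (0 < #|edgeK N|)%N.
Proof.
apply/card_gt0P; case: (pickP (fun w => P w != 0)) => [w _|none].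
  by exists (theta w).
have := prob_sum1 P_prob; rewrite big1 => [/eqP|w _]; first by rewrite eq_sym oner_eq0.
exact/eqP/negbFE/none.
Qed.

Lemma Pr_cond_theta e (E : pred Omega) :
  Pr (cond_theta e) E = #|edgeK N|%:R * Pr P (fun w => (theta w == e) && E w).
Proof.
rewrite /Pr /cond_theta big_distrr /= [RHS]big_mkcond [LHS]big_mkcond /=.
by apply: eq_bigr => w _; case: (E w); case: (theta w == e); rewrite ?andbF ?andbT.
Qed.

Lemma cond_theta_prob e : is_prob (cond_theta e).
Proof.
have theta_unif : Pr P (fun w => theta w == e) = #|edgeK N|%:R^-1 by case: scheme => _ [].
split=> [w|]; first by rewrite /cond_theta; case: ifP; rewrite ?mulr_ge0 ?ler0n ?prob_ge0.
have := Pr_cond_theta e xpredT; rewrite /Pr => ->.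
rewrite (eq_bigl (fun w => theta w == e)) => [|w]; last by rewrite andbT.
rewrite -/(Pr P (fun w => theta w == e)) theta_unif mulfV //.
by rewrite pnatr_eq0 -lt0n card_edges_gt0.
Qed.

Lemma cond_theta_supp e w : cond_theta e w != 0 -> P w != 0 /\ theta w = e.
Proof.
rewrite /cond_theta; case: (eqVneq (theta w) e) => [-> | _]; last by rewrite eqxx.
by rewrite mulf_eq0 negb_or => /andP[].
Qed.

Lemma file_determined e (D : pred (edgeK N)) :
  determined (cond_theta e) (W e) (fun w => (answers w, view D w)).
Proof.
have [dec decE] : exists dec : (forall i, Qt i) -> (forall i, At i) -> 'rV['F_2]_L,
    forall w, 0 < P w -> dec (fun i => Q i w) (fun i => A i w) = W (theta w) w.
  by case: scheme => _ [].
move=> w w' /cond_theta_supp[Pw <-] /cond_theta_supp[Pw' theta_w'].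
move=> [/ffunP eA /ffunP eQ _].
rewrite -{2}theta_w' -decE ?prob_gt0 // -decE ?prob_gt0 //.
by congr dec; apply: functional_extensionality_dep => i; [have := eQ i | have := eA i];
  rewrite !ffunE.
Qed.

Lemma file_view_eqE d u (q : {dffun forall i, Qt i}) (o : {ffun edgeK N -> 'rV['F_2]_L})
    w :
  o d = 0 ->
  ((W d w, view (pred1 d) w) == (u, (q, o)))
  = [forall i, Q i w == q i] && (all_files W w == [ffun x => if x == d then u else o x]).
Proof.
move=> od0; rewrite !xpair_eqE andbCA; congr andb.
  apply/eqP/forallP => [<- i|eQ]; first by rewrite ffunE.
  by apply/ffunP => i; rewrite /queries ffunE; exact/eqP/eQ.
apply/andP/eqP => [[/eqP <- /eqP <-]|/ffunP eF].
  by apply/ffunP => x; rewrite !ffunE /=; case: eqP => [->|].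
split; apply/eqP; first by have := eF d; rewrite !ffunE eqxx.
apply/ffunP => x; have := eF x; rewrite !ffunE /=.
by case: eqP => [-> _|_ ->].
Qed.

Lemma Pr_file_view e d u (y : {dffun forall i, Qt i} * {ffun edgeK N -> 'rV['F_2]_L}) :
  Pr (cond_theta e) (fun w => (W d w, view (pred1 d) w) == (u, y))
  = #|edgeK N|%:R * (if y.2 d == 0 then
      Pr P (fun w => (theta w == e) && [forall i, Q i w == y.1 i])
      * (2 ^ (L * #|edgeK N|))%N%:R^-1 else 0).
Proof.
have [_ [files_unif _ files_indep _ _]] := scheme.
case: y => q o; rewrite Pr_cond_theta /=; congr (_ * _).
case: (eqVneq (o d) 0) => [od0|od_neq0].
  rewrite -(files_unif [ffun x => if x == d then u else o x]).
  rewrite -(files_indep e (fun i => q i)).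
  by apply: eq_bigl => w; rewrite file_view_eqE.
rewrite /Pr big_pred0 // => w; rewrite !xpair_eqE.
apply/negP => /and4P[_ _ _ /eqP masked_o]; move: od_neq0.
by rewrite -masked_o ffunE /= eqxx eqxx.
Qed.

Lemma file_uniform e d u :
  Pr (cond_theta e) (fun w => W d w == u) = #|{: 'rV['F_2]_L}|%:R^-1.
Proof. exact: (uniform_of_joint_const (cond_theta_prob e) (Pr_file_view e d)). Qed.

Lemma file_indep_view e d : indep (cond_theta e) (W d) (view (pred1 d)).
Proof. exact: (indep_of_joint_const (cond_theta_prob e) (Pr_file_view e d)). Qed.

Lemma entropy_file e d : entropy (cond_theta e) (W d) = L%:R.
Proof.
rewrite (entropy_uniform (cond_theta_prob e) (file_uniform e d)) card_mx card_Fp //.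
by rewrite mul1n /log2 RdivE ln_exp2n mulfK // gt_eqF // ln2_gt0.
Qed.

Lemma local_law e i x :
  Pr (cond_theta e) (fun w => local i w == x) = Pr P (fun w => local i w == x).
Proof.
have [_ [_ theta_unif _ _ private]] := scheme.
have := indep_of_cond_entropy P_prob (private i) e x.
have -> : Pr P (fun w => (theta w, local i w) == (e, x))
          = Pr P (fun w => (theta w == e) && (local i w == x)).
  by apply: eq_bigl => w; rewrite xpair_eqE.
rewrite Pr_cond_theta => ->; rewrite theta_unif mulrA mulfV ?mul1r //.
by rewrite pnatr_eq0 -lt0n card_edges_gt0.
Qed.

Lemma entropy_answer_cond_theta e k : entropy (cond_theta e) (A k) = entropy P (A k).
Proof.
exact (entropy_comp_eq_law (V := local k) (fun x => ans x.1 x.2) (local_law (i := k) e)).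
Qed.

Lemma cond_entropy_local_view_cond_theta e k d :
  cond_entropy (cond_theta e) (A k) (local_view k d) = cond_entropy P (A k) (local_view k d).
Proof.
exact (cond_entropy_comp_eq_law (V := local k) (fun x => ans x.1 x.2)
  (fun x => (x.1, [ffun s : server_files k => if sval s == d then 0 else x.2 s]))
  (local_law (i := k) e)).
Qed.

(* W_d is independent of the rest of the view and A_k depends on the view only through
   the local data of server k, so masking every file but W_d loses nothing; privacy then
   removes the conditioning on theta. *)
Lemma cond_entropy_view_local e k d :
  cond_entropy (cond_theta e) (A k) (view (pred1 d)) = cond_entropy P (A k) (local_view k d).
Proof.
have Pe := cond_theta_prob e.
have local_det : determined (cond_theta e) (local_view k d) (view (pred1 d)).
  by move=> w w' _ _; exact: local_view_eq.
rewrite -(cond_entropy_local_view_cond_theta e); apply/eqP; rewrite eq_le.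
apply/andP; split.
  exact: (@cond_entropy_le_r _ _ Pe _ _ _ (A k) _ (local_view k d) local_det).
apply: (cond_entropy_le_indep Pe local_det _ (file_indep_view e d)).
by move=> w w' _ _ eWl; apply: answer_eq_local (congr1 fst eWl) (congr1 snd eWl).
Qed.

(** * Download bounds *)

Lemma edge_bound a b d : joins d a b ->
  L%:R <= cond_entropy P (A a) (local_view a d) + cond_entropy P (A b) (local_view b d).
Proof.
move=> dab; have Pd := cond_theta_prob d.
have answers_det :
    determined (cond_theta d) answers (fun w => ((A a w, A b w), view (pred1 d) w)).
  move=> w w' _ _ /pair_equal_spec[/pair_equal_spec[ea eb] ev].
  apply: (answers_eq_view (S := fun k => (k == a) || (k == b))) ev _ => [x k /eqP->|k].
    by rewrite dab.
  by case/orP => /eqP->.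
have file_view : cond_entropy (cond_theta d) (W d) (view (pred1 d)) = L%:R.
  by rewrite (cond_entropy_indep Pd (file_indep_view d d)) entropy_file.
have := cond_entropy_le_l Pd (file_determined (e := d) (D := pred1 d)).
have := cond_entropy_le_l Pd answers_det.
have := cond_entropy_pair_le Pd (A a) (A b) (view (pred1 d)).
rewrite -(cond_entropy_view_local d a d) -(cond_entropy_view_local d b d).
move: file_view; lra.
Qed.

Lemma cond_entropy_answers_le e (D : pred (edgeK N)) a b c :
  (forall x k, D x -> incident k x -> [|| k == a, k == b | k == c]) ->
  cond_entropy (cond_theta e) answers (view D)
  <= entropy P (A a) + entropy P (A b) + entropy P (A c).
Proof.
move=> D_abc; have Pe := cond_theta_prob e.
have answers_det : determined (cond_theta e) answers
    (fun w => ((A a w, A b w, A c w), view D w)).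
  move=> w w' _ _ /pair_equal_spec[/pair_equal_spec[/pair_equal_spec[ea eb] ec] ev].
  by apply: (answers_eq_view D_abc ev) => k /or3P[] /eqP->.
apply: le_trans (cond_entropy_le_l Pe answers_det) _.
apply: le_trans (cond_entropy_le Pe _ _) _.
rewrite -!(entropy_answer_cond_theta e).
apply: le_trans (entropy_pair_le Pe _ _) _; rewrite lerD2r.
exact: entropy_pair_le.
Qed.

Lemma path_bound a b c e f g :
  a != b -> a != c -> b != c -> joins e a b -> joins f a c -> joins g b c ->
  L%:R + cond_entropy P (A a) (local_view a f) + cond_entropy P (A b) (local_view b g)
  <= entropy P (A a) + entropy P (A b) + entropy P (A c).
Proof.
move=> ab ac bc eab fac gbc; have Pe := cond_theta_prob e.
pose D2 := [pred x | (x == f) || (x == g)].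
pose O := [pred x | (x == e) || D2 x].
have e_notin_D2 : ~~ D2 e.
  have ba : b != a by rewrite eq_sym.
  by rewrite /D2 /= negb_or (joins_neq eab fac ba bc) (joins_neq (joinsC eab) gbc ab ac).
have view_O_det : determined (cond_theta e) (view O) (view (pred1 e)).
  by move=> w w' _ _; apply: view_sub_eq => x /eqP->; rewrite /= eqxx.
have view_D2_det : determined (cond_theta e) (view D2) (view (pred1 g)).
  by move=> w w' _ _; apply: view_sub_eq => x /eqP->; rewrite /= eqxx orbT.
have Ab_det : determined (cond_theta e) (fun w => (A b w, view D2 w)) (view (pred1 f)).
  move=> w w' _ _ ev; congr pair; last by apply: view_sub_eq ev => x /eqP->; rewrite /= eqxx.
  by apply: answer_eq_view ev => x /eqP->; rewrite fac negb_or eq_sym ab bc.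
have rest_det : determined (cond_theta e) (fun w => (W e w, view O w)) (view D2).
  move=> w w' _ _ ev; congr pair; last by apply: view_sub_eq ev => x Dx; apply/orP; right.
  by have [_ ->] := (view_eq D2 w w').1 ev.
have Aab_det : determined (cond_theta e) (fun w => (A a w, A b w))
    (fun w => (answers w, (W e w, view O w))).
  by move=> w w' _ _ /(congr1 fst)/ffunP eA; congr pair; [have := eA a | have := eA b];
    rewrite !ffunE.
have We_det : determined (cond_theta e) (fun w => (answers w, W e w))
    (fun w => (answers w, view O w)).
  move=> w w' Pw Pw' /[dup] /pair_equal_spec[eA _] eAv; congr pair; first exact: eA.
  exact: file_determined Pw Pw' eAv.
(* H(A | view O) >= H(W_e | view O) + H(A_a, A_b | W_e, view O) with O = {e, f, g},
   and W_e, view O are determined by view {f, g}. *)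
rewrite -(cond_entropy_view_local e a f) -(cond_entropy_view_local e b g).
rewrite -(entropy_file e e) -(cond_entropy_indep Pe (file_indep_view e e)).
apply: le_trans (cond_entropy_answers_le e (D := O) _) => [|x k]; last first.
  by case/orP=> [|/orP[]] /eqP->; rewrite ?eab ?fac ?gbc => /orP[]/eqP->; rewrite eqxx ?orbT.
apply: le_trans (cond_entropy_le_l Pe We_det); rewrite cond_entropy_pairE // -addrA.
apply: lerD; first exact: (@cond_entropy_le_r _ _ Pe _ _ _ _ _ _ view_O_det).
apply: le_trans (cond_entropy_le_l Pe Aab_det).
apply: le_trans (cond_entropy_le_r Pe _ rest_det).
rewrite cond_entropy_pairE // [leRHS]addrC.
apply: lerD; first exact: (@cond_entropy_le_r _ _ Pe _ _ _ _ _ _ Ab_det).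
exact: (@cond_entropy_le_r _ _ Pe _ _ _ _ _ _ view_D2_det).
Qed.

Lemma triangle_bound a b c : a != b -> a != c -> b != c ->
  2 * L%:R <= entropy P (A a) + entropy P (A b) + entropy P (A c).
Proof.
move=> ab ac bc.
have ba : b != a by rewrite eq_sym.
have ca : c != a by rewrite eq_sym.
have cb : c != b by rewrite eq_sym.
have [e eab] := exists_joins ab; have [f fac] := exists_joins ac.
have [g gbc] := exists_joins bc.
have := path_bound ab ac bc eab fac gbc.
have := path_bound ac ab cb fac eab (joinsC gbc).
have := path_bound bc ba ca gbc (joinsC eab) (joinsC fac).
have := edge_bound eab; have := edge_bound fac; have := edge_bound gbc.
lra.
Qed.

End Scheme.

(* Each index occurs in exactly three of the triples (k, k + 1, k + 2) mod N. *)
Lemma sum_ge_of_triples (N : nat) (H : 'I_N -> R) (t : R) :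
  (3 <= N)%N ->
  (forall a b c, a != b -> a != c -> b != c -> t <= H a + H b + H c) ->
  N%:R * t <= 3 * \sum_i H i.
Proof.
move=> N_ge3 triple.
have valS (k : 'I_N) : nat_of_ord (ordS k) = (if k.+1 < N then k.+1 else 0)%N.
  rewrite /=; case: ltnP => [/modn_small //|N_le].
  have -> : k.+1 = N by apply/eqP; rewrite eqn_leq ltn_ord N_le.
  exact: modnn.
have ordS_neq (k : 'I_N) : k != ordS k.
  apply/eqP => /(congr1 (@nat_of_ord N)); rewrite valS; have := ltn_ord k.
  by case: (ltnP k.+1 N); lia.
have ordSS_neq (k : 'I_N) : k != ordS (ordS k).
  apply/eqP => /(congr1 (@nat_of_ord N)); rewrite !valS; have := ltn_ord k.
  by case: (ltnP k.+1 N) => ?; [case: (ltnP k.+2 N) | case: (ltnP 1 N)]; lia.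
have rotate (F : 'I_N -> 'I_N) : injective F -> \sum_k H (F k) = \sum_k H k.
  by move=> F_inj; rewrite [RHS](reindex_inj F_inj).
rewrite mulr_natl -[in leLHS](card_ord N) -sumr_const.
have triples k := triple _ _ _ (ordS_neq k) (ordSS_neq k) (ordS_neq (ordS k)).
apply: le_trans (ler_sum _ (fun k _ => triples k)) _.
rewrite !big_split /= (rotate _ (@ordS_inj N)) (rotate (fun k => ordS (ordS k))).
  by lra.
exact: inj_comp (@ordS_inj N) (@ordS_inj N).
Qed.

Lemma rate_le_of_download (N : nat) (l D : R) :
  (3 <= N)%N -> 0 <= D -> N%:R * (2 * l) <= 3 * D -> l / D <= 2 / N.+1%:R.
Proof.
move=> N_ge3 D_ge0 download.
have N3 : 3 <= N%:R :> R by rewrite (ler_nat R 3).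
(* D = 0 is covered by the convention l / 0 = 0. *)
case: (eqVneq D 0) => [->|D_neq0]; first by rewrite invr0 mulr0 divr_ge0 ?ler0n.
have D_gt0 : 0 < D by rewrite lt_def D_neq0.
rewrite ler_pdivrMr // mulrAC ler_pdivlMr ?ltr0n // -natr1.
by have [l_ge0|l_lt0] := lerP 0 l; nra.
Qed.

Theorem corollary2 (N L : nat) (Omega : finType) (P : Omega -> R)
  (theta : Omega -> edgeK N)
  (Qt : 'I_N -> finType) (Q : forall i, Omega -> Qt i)
  (At : 'I_N -> finType)
  (ans : forall i, Qt i -> {ffun server_files i -> 'rV['F_2]_L} -> At i)
  (W : edgeK N -> Omega -> 'rV['F_2]_L) :
  (3 <= N)%N ->
  KN_PIR_scheme P theta Q ans W ->
  PIR_rate P Q ans W <= 2 / (N.+1)%:R.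
Proof.
move=> N_ge3 scheme; have P_prob : is_prob P by case: scheme.
rewrite /PIR_rate RdivE; apply: (rate_le_of_download N_ge3).
  by apply: sumr_ge0 => i _; exact: entropy_ge0.
exact: sum_ge_of_triples N_ge3 (triangle_bound scheme).
Qed.
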